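(* Let $K,G,\eta,\bar\eta,\xi,c_0>0$ and let $H:\mathbb R_+\to\mathbb R_+$ be nondecreasing, strongly semismooth, with $H(0)=0$. For $\boldsymbol\sigma\in\mathbb R^{3\times3}_{sym}$ and $\kappa\ge0$ let $f(\boldsymbol\sigma,\kappa)=\hat f(p(\boldsymbol\sigma),\varrho(\boldsymbol\sigma),\kappa)=\sqrt{\tfrac12}\,\varrho(\boldsymbol\sigma)+\eta\, p(\boldsymbol\sigma)-\xi(c_0+\kappa)$. Let a trial stress $\boldsymbol\sigma^{tr}\in\mathbb R^{3\times3}_{sym}$ and $\bar\varepsilon^{p,tr}\ge0$ be given, with $p^{tr}=p(\boldsymbol\sigma^{tr})$, $\mathbf s^{tr}=\mathbf s(\boldsymbol\sigma^{tr})$, $\varrho^{tr}=\|\mathbf s^{tr}\|$, $\mathbf n^{tr}=\mathbf s^{tr}/\varrho^{tr}$, and assume $f(\boldsymbol\sigma^{tr},H(\bar\varepsilon^{p,tr}))>0$. Consider the problem (P): find $\boldsymbol\sigma\in\mathbb R^{3\times3}_{sym}$, $\bar\varepsilon^p$, $\triangle\lambda$ such that $$\boldsymbol\sigma=\boldsymbol\sigma^{tr}-\triangle\lambda\big(G\sqrt2\,\hat{\mathbf n}+K\bar\eta\mathbf I\big)\ \text{for some }\hat{\mathbf n}\in\partial\varrho(\boldsymbol\sigma),\quad \bar\varepsilon^p=\bar\varepsilon^{p,tr}+\triangle\lambda\xi,\quad f(\boldsymbol\sigma,H(\bar\varepsilon^p))=0.$$ If $(\boldsymbol\sigma,\bar\varepsilon^p,\triangle\lambda)$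 solves (P) and $p=p(\boldsymbol\sigma)$, $\varrho=\varrho(\boldsymbol\sigma)$, then $(p,\varrho,\bar\varepsilon^p,\triangle\lambda)$ solves the system (R): $$p=p^{tr}-\triangle\lambda K\bar\eta,\quad \varrho=(\varrho^{tr}-\triangle\lambda G\sqrt2)^+,\quad \bar\varepsilon^p=\bar\varepsilon^{p,tr}+\triangle\lambda\xi,\quad \hat f(p,\varrho,H(\bar\varepsilon^p))=0.$$ Conversely, if $(p,\varrho,\bar\varepsilon^p,\triangle\lambda)$ solves (R), then $(\boldsymbol\sigma,\bar\varepsilon^p,\triangle\lambda)$ solves (P), where $\boldsymbol\sigma=\boldsymbol\sigma^{tr}-\triangle\lambda(G\sqrt2\,\mathbf n^{tr}+K\bar\eta\mathbf I)$ if $\varrho^{tr}>\triangle\lambda G\sqrt2$ and $\boldsymbol\sigma=(p^{tr}-\triangle\lambda K\bar\eta)\mathbf I$ if $\varrho^{tr}\le\triangle\lambda G\sqrt2$.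
   Context: $\mathbb R^{3\times3}_{sym}$: real symmetric $3\times3$ matrices with Frobenius product '':'' and norm; $\mathbf I$ identity; $p(\boldsymbol\sigma)=\frac13\mathbf I:\boldsymbol\sigma$, $\mathbf s(\boldsymbol\sigma)=\boldsymbol\sigma-p(\boldsymbol\sigma)\mathbf I$, $\varrho(\boldsymbol\sigma)=\|\mathbf s(\boldsymbol\sigma)\|$; $(x)^+=\max\{0,x\}$. The subdifferential of $\varrho$ is $\partial\varrho(\boldsymbol\sigma)=\{\mathbf s(\boldsymbol\sigma)/\varrho(\boldsymbol\sigma)\}$ if $\varrho(\boldsymbol\sigma)>0$ and $\partial\varrho(\boldsymbol\sigma)=\{\hat{\mathbf n}\in\mathbb R^{3\times3}_{sym}:\mathbf I:\hat{\mathbf n}=0,\ \|\hat{\mathbf n}\|\le1\}$ if $\varrho(\boldsymbol\sigma)=0$. A function is strongly semismooth if it is locally Lipschitz, directionally differentiable, and $F(x+h)-F(x)-Vh=O(\|h\|^2)$ for all $V$ in the Clarke generalized Jacobian $\partial F(x+h)$ as $h\to0$. *)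

From HB Require Import structures.
From mathcomp Require Import all_boot all_order all_algebra.
From mathcomp Require Import all_classical all_reals all_analysis.
Set Implicit Arguments. Unset Strict Implicit. Unset Printing Implicit Defensive.
Import Order.TTheory GRing.Theory Num.Theory.
Import numFieldNormedType.Exports.
Local Open Scope classical_set_scope.
Local Open Scope ring_scope.

Section Defs.
Variable R : realType.

Definition symm (A : 'M[R]_3) : Prop := A^T = A.
Definition fdot (A B : 'M[R]_3) : R := \sum_(i < 3) \sum_(j < 3) A i j * B i j.
Definition fnorm (A : 'M[R]_3) : R := Num.sqrt (fdot A A).
Definition pres (s : 'M[R]_3) : R := 3^-1 * fdot 1%:M s.
Definition dev (s : 'M[R]_3) : 'M[R]_3 := s - (pres s)%:M.
Definition rho (s : 'M[R]_3) : R := fnorm (dev s).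
Definition pos_part (x : R) : R := Num.max 0 x.

Definition subdiff_rho (s : 'M[R]_3) : set 'M[R]_3 :=
  if 0 < rho s then [set (rho s)^-1 *: dev s]
  else [set n | symm n /\ fdot 1%:M n = 0 /\ fnorm n <= 1].

Definition fhat (eta xi c0 : R) (p r kappa : R) : R :=
  Num.sqrt (2^-1) * r + eta * p - xi * (c0 + kappa).
Definition fyield (eta xi c0 : R) (s : 'M[R]_3) (kappa : R) : R :=
  fhat eta xi c0 (pres s) (rho s) kappa.

Definition loc_lipschitz_nonneg (F : R -> R) : Prop :=
  forall x, 0 <= x -> exists L r : R, 0 < r /\
    forall y z, 0 <= y -> 0 <= z -> `|y - x| < r -> `|z - x| < r ->
      `|F y - F z| <= L * `|y - z|.

Definition dir_diff_nonneg (F : R -> R) : Prop :=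
  forall x h, 0 <= x -> (0 < x \/ 0 <= h) ->
    exists d : R, (fun t => (F (x + t * h) - F x) / t) t @[t --> 0^'+] --> d.

Definition bsubdiff (F : R -> R) (y : R) : set R :=
  [set v | exists u : nat -> R,
      (forall k, 0 < u k /\ derivable F (u k) 1) /\
      u @ \oo --> y /\ (fun k => derive1 F (u k)) @ \oo --> v].

(* Clarke generalized Jacobian (convex hull of the B-subdifferential, in 1-d) *)
Definition clarke (F : R -> R) (y : R) : set R :=
  [set v | exists a b, bsubdiff F y a /\ bsubdiff F y b /\ a <= v /\ v <= b].

Definition strongly_semismooth_nonneg (F : R -> R) : Prop :=
  loc_lipschitz_nonneg F /\ dir_diff_nonneg F /\
  forall x, 0 <= x -> exists C d : R, 0 < d /\
    forall h V, `|h| < d -> 0 <= x + h -> clarke F (x + h) V ->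
      `|F (x + h) - F x - V * h| <= C * h ^+ 2.

Definition solves_P (K G eta etab xi c0 : R) (H : R -> R)
  (sigtr : 'M[R]_3) (epstr : R) (sig : 'M[R]_3) (eps dl : R) : Prop :=
  symm sig /\ 0 <= dl /\
  (exists nh, subdiff_rho sig nh /\
     sig = sigtr - dl *: (G * Num.sqrt 2 *: nh + (K * etab)%:M)) /\
  eps = epstr + dl * xi /\
  fyield eta xi c0 sig (H eps) = 0.

Definition solves_R (K G eta etab xi c0 : R) (H : R -> R)
  (sigtr : 'M[R]_3) (epstr : R) (p r eps dl : R) : Prop :=
  0 <= dl /\
  p = pres sigtr - dl * K * etab /\
  r = pos_part (rho sigtr - dl * G * Num.sqrt 2) /\
  eps = epstr + dl * xi /\
  fhat eta xi c0 p r (H eps) = 0.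

Definition sigma_of_R (K G etab : R) (sigtr : 'M[R]_3) (dl : R) : 'M[R]_3 :=
  if dl * G * Num.sqrt 2 < rho sigtr then
    sigtr - dl *: (G * Num.sqrt 2 *: ((rho sigtr)^-1 *: dev sigtr) + (K * etab)%:M)
  else (pres sigtr - dl * K * etab)%:M.

End Defs.

From HB Require Import structures.
From mathcomp Require Import all_boot all_order all_algebra.
From mathcomp Require Import all_classical all_reals all_analysis.
From mathcomp Require Import ring.
Import Order.TTheory GRing.Theory Num.Theory.
Set Implicit Arguments. Unset Strict Implicit. Unset Printing Implicit Defensive.
Local Open Scope ring_scope.

(* The return map [sigma = sigma^tr - dl (g n + k I)] with a normal [n] of
   trace zero moves the pressure by [- dl k] and the deviator by [- dl g n].
   Since [n] lies in the subdifferential of the norm of the new deviator, the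
   deviator only shrinks radially: either it stays parallel to [s^tr] with
   length [rho^tr - dl g], or it vanishes, which is possible exactly when
   [rho^tr <= dl g].  Hence [rho = (rho^tr - dl g)^+].  Conversely, in the
   first case [n^tr] is the normal of the returned stress, and in the second
   [s^tr / (dl g)] is a normal of norm at most one at the apex. *)

Section ReturnMapping.
Variable R : realType.
Implicit Types (A B C N S T : 'M[R]_3) (a c g k dl : R).

Lemma fdotC A B : fdot A B = fdot B A.
Proof. by apply: eq_bigr => i _; apply: eq_bigr => j _; rewrite mulrC. Qed.

Lemma fdotD A B C : fdot A (B + C) = fdot A B + fdot A C.
Proof.
rewrite /fdot -big_split; apply: eq_bigr => i _.
by rewrite -big_split; apply: eq_bigr => j _; rewrite mxE mulrDr.
Qed.

Lemma fdotZ A B c : fdot A (c *: B) = c * fdot A B.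
Proof.
rewrite /fdot mulr_sumr; apply: eq_bigr => i _.
by rewrite mulr_sumr; apply: eq_bigr => j _; rewrite mxE mulrCA.
Qed.

Lemma fdotB A B C : fdot A (B - C) = fdot A B - fdot A C.
Proof. by rewrite -scaleN1r fdotD fdotZ mulN1r. Qed.

Lemma fdot1C c : fdot 1%:M (c%:M : 'M[R]_3) = 3 * c.
Proof. by rewrite /fdot !big_ord_recr !big_ord0 /= !mxE /=; ring. Qed.

Lemma fdot_ge0 A : 0 <= fdot A A.
Proof. by apply: sumr_ge0 => i _; apply: sumr_ge0 => j _; rewrite -expr2 sqr_ge0. Qed.

Lemma fnormZ c A : fnorm (c *: A) = `|c| * fnorm A.
Proof.
rewrite /fnorm fdotZ fdotC fdotZ mulrA -expr2.
by rewrite sqrtrM ?sqr_ge0 // sqrtr_sqr.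
Qed.

Lemma fnorm_eq0 A : fnorm A = 0 -> A = 0.
Proof.
move=> /eqP; rewrite sqrtr_eq0 => hA.
have sq_ge0 (x : R) : 0 <= x * x by rewrite -expr2 sqr_ge0.
have row0 i : \sum_(j < 3) A i j * A i j = 0.
  apply: (psumr_eq0P (P := predT) (F := fun i => \sum_(j < 3) A i j * A i j)) => //.
    by move=> l _; apply: sumr_ge0 => m _; exact: sq_ge0.
  by apply/eqP; rewrite eq_le hA fdot_ge0.
apply/matrixP => i j; rewrite mxE.
have /eqP := psumr_eq0P (fun l _ => sq_ge0 _) (row0 i) (i := j) isT.
by rewrite mulf_eq0 orbb => /eqP.
Qed.

Lemma presD A B : pres (A + B) = pres A + pres B.
Proof. by rewrite /pres fdotD mulrDr. Qed.

Lemma presZ c A : pres (c *: A) = c * pres A.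
Proof. by rewrite /pres fdotZ mulrCA. Qed.

Lemma presB A B : pres (A - B) = pres A - pres B.
Proof. by rewrite /pres fdotB mulrBr. Qed.

Lemma presC c : pres (c%:M : 'M[R]_3) = c.
Proof. by rewrite /pres fdot1C mulrA mulVf ?mul1r. Qed.

Lemma pres_tr0 N : fdot 1%:M N = 0 -> pres N = 0.
Proof. by rewrite /pres => ->; rewrite mulr0. Qed.

Lemma devB A B : dev (A - B) = dev A - dev B.
Proof.
rewrite /dev presB; apply/matrixP => i j; rewrite !mxE.
by case: (i == j); rewrite ?mulr1n ?mulr0n; ring.
Qed.

Lemma devD A B : dev (A + B) = dev A + dev B.
Proof.
rewrite /dev presD; apply/matrixP => i j; rewrite !mxE.
by case: (i == j); rewrite ?mulr1n ?mulr0n; ring.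
Qed.

Lemma devZ c A : dev (c *: A) = c *: dev A.
Proof. by rewrite /dev presZ scalerBr scale_scalar_mx. Qed.

Lemma devC c : dev (c%:M : 'M[R]_3) = 0.
Proof. by rewrite /dev presC subrr. Qed.

Lemma dev_tr0 N : fdot 1%:M N = 0 -> dev N = N.
Proof. by move=> /pres_tr0; rewrite /dev => ->; rewrite raddf0 subr0. Qed.

Lemma fdot_dev A : fdot 1%:M (dev A) = 0.
Proof. by rewrite /dev fdotB fdot1C /pres mulrA divff ?mul1r ?subrr. Qed.

Lemma pres_add_dev A : (pres A)%:M + dev A = A.
Proof. by rewrite /dev addrC subrK. Qed.

Lemma rho_ge0 A : 0 <= rho A.
Proof. exact: sqrtr_ge0. Qed.

Lemma rhoC c : rho (c%:M : 'M[R]_3) = 0.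
Proof. by rewrite /rho devC -(scale0r (0 : 'M[R]_3)) fnormZ normr0 mul0r. Qed.

Lemma symmD A B : symm A -> symm B -> symm (A + B).
Proof. by move=> hA hB; rewrite /symm linearD /= hA hB. Qed.

Lemma symmZ c A : symm A -> symm (c *: A).
Proof. by move=> hA; rewrite /symm linearZ /= hA. Qed.

Lemma symmB A B : symm A -> symm B -> symm (A - B).
Proof. by move=> hA hB; rewrite /symm linearB /= hA hB. Qed.

Lemma symmC c : symm (c%:M : 'M[R]_3).
Proof. exact: tr_scalar_mx. Qed.

Lemma symm_dev A : symm A -> symm (dev A).
Proof. by move=> hA; apply: symmB => //; apply: symmC. Qed.

Lemma symm_return T N g k dl :
  symm T -> symm N -> symm (T - dl *: (g *: N + k%:M)).
Proof. by move=> hT hN; apply/symmB/symmZ/symmD/symmC/symmZ. Qed.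

Lemma pos_part_id a : 0 <= a -> pos_part a = a.
Proof. exact: max_idPr. Qed.

Lemma pos_part_eq0 a : a <= 0 -> pos_part a = 0.
Proof. exact: max_idPl. Qed.

Lemma subdiff_rho_tr0 S N : subdiff_rho S N -> fdot 1%:M N = 0.
Proof.
rewrite /subdiff_rho; case: ifP => _; last by case=> _ [].
by move=> ->; rewrite fdotZ fdot_dev mulr0.
Qed.

Lemma pres_return S N g k dl :
  fdot 1%:M N = 0 -> pres (S - dl *: (g *: N + k%:M)) = pres S - dl * k.
Proof. by move=> /pres_tr0 hN; rewrite presB presZ presD presZ presC hN mulr0 add0r. Qed.

Lemma dev_return S N g k dl :
  fdot 1%:M N = 0 -> dev (S - dl *: (g *: N + k%:M)) = dev S - (dl * g) *: N.
Proof. by move=> /dev_tr0 hN; rewrite devB devZ devD devZ devC hN addr0 scalerA. Qed.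

Lemma rho_return S T N a :
  0 <= a -> dev S = dev T - a *: N -> subdiff_rho S N -> rho S = pos_part (rho T - a).
Proof.
move=> ha hS; have hT : dev T = dev S + a *: N by rewrite hS subrK.
rewrite /subdiff_rho; have [hS_gt0 hN|hS_le0 [_ [_ hN]]] := ltP 0 (rho S).
  have hrT : rho T = rho S + a.
    rewrite /rho hT hN scalerA -[X in X + _]scale1r -scalerDl fnormZ -/(rho S).
    by rewrite ger0_norm ?addr_ge0 ?divr_ge0 ?rho_ge0 //; field; rewrite gt_eqF.
  by rewrite hrT addrK pos_part_id ?ltW.
have hrS : rho S = 0 by apply/eqP; rewrite eq_le hS_le0 rho_ge0.
have hS0 : dev S = 0 by apply: fnorm_eq0.
have hrT : rho T <= a.
  by rewrite /rho hT hS0 add0r fnormZ ger0_norm // ler_piMr.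
by rewrite hrS pos_part_eq0 ?subr_le0.
Qed.

Lemma subdiff_rho_return_smooth T g k dl (n := (rho T)^-1 *: dev T) :
  0 <= dl * g -> dl * g < rho T -> subdiff_rho (T - dl *: (g *: n + k%:M)) n.
Proof.
move=> hdlg hlt; have hT : 0 < rho T by apply: le_lt_trans hlt.
have hn : fdot 1%:M n = 0 by rewrite fdotZ fdot_dev mulr0.
have hS : dev (T - dl *: (g *: n + k%:M)) = (1 - dl * g / rho T) *: dev T.
  by rewrite dev_return // scalerA scalerBl scale1r.
have hrS : rho (T - dl *: (g *: n + k%:M)) = rho T - dl * g.
  rewrite /rho hS fnormZ -/(rho T) ger0_norm; last by rewrite subr_ge0 ler_pdivrMr ?mul1r ?ltW.
  by field; rewrite gt_eqF.
rewrite /subdiff_rho hrS subr_gt0 hlt hS scalerA /n; congr (_ *: _).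
by field; rewrite !gt_eqF ?subr_gt0.
Qed.

Lemma subdiff_rho_apex T c a :
  symm T -> rho T <= a -> subdiff_rho (c%:M) (a^-1 *: dev T).
Proof.
move=> hsym hle; rewrite /subdiff_rho rhoC ltxx.
split; first by apply/symmZ/symm_dev.
split; first by rewrite fdotZ fdot_dev mulr0.
rewrite fnormZ -/(rho T); have [->|a_neq0] := eqVneq a 0; first by rewrite invr0 normr0 mul0r.
have ha : 0 < a by rewrite lt_neqAle eq_sym a_neq0 (le_trans (rho_ge0 T)).
by rewrite ger0_norm ?invr_ge0 ?(ltW ha) // mulrC ler_pdivrMr ?mul1r.
Qed.

Lemma return_apex T g k dl :
  rho T <= dl * g -> T - dl *: (g *: ((dl * g)^-1 *: dev T) + k%:M) = (pres T - dl * k)%:M.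
Proof.
move=> hle; have hdevT : (dl * g) *: ((dl * g)^-1 *: dev T) = dev T.
  have [a0|a_neq0] := eqVneq (dl * g) 0; last by rewrite scalerA divff ?scale1r.
  have /fnorm_eq0 -> : rho T = 0 by apply/eqP; rewrite eq_le rho_ge0 andbT -a0.
  by rewrite !scaler0.
rewrite scalerDr scalerA hdevT scale_scalar_mx -{1}(pres_add_dev T) raddfB /=.
by rewrite opprD addrA addrK.
Qed.

End ReturnMapping.

Theorem theorem2 (R : realType) (K G eta etab xi c0 : R) (H : R -> R)
  (hK : 0 < K) (hG : 0 < G) (heta : 0 < eta) (hetab : 0 < etab)
  (hxi : 0 < xi) (hc0 : 0 < c0)
  (hH0 : H 0 = 0)
  (hHpos : forall x, 0 <= x -> 0 <= H x)
  (hHmon : forall x y, 0 <= x -> x <= y -> H x <= H y)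
  (hHss : strongly_semismooth_nonneg H)
  (sigtr : 'M[R]_3) (epstr : R)
  (hsym : symm sigtr) (hepstr : 0 <= epstr)
  (htrial : 0 < fyield eta xi c0 sigtr (H epstr)) :
  (forall (sig : 'M[R]_3) (eps dl : R),
      solves_P K G eta etab xi c0 H sigtr epstr sig eps dl ->
      solves_R K G eta etab xi c0 H sigtr epstr (pres sig) (rho sig) eps dl) /\
  (forall p r eps dl : R,
      solves_R K G eta etab xi c0 H sigtr epstr p r eps dl ->
      solves_P K G eta etab xi c0 H sigtr epstr (sigma_of_R K G etab sigtr dl) eps dl).
Proof.
have hg : 0 < G * Num.sqrt 2 by rewrite mulr_gt0 // sqrtr_gt0 ltr0n.
split.
  move=> sig eps dl [_ [hdl [[n [hn hsig]] [heps hf]]]]; rewrite /solves_R -!mulrA.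
  have hdlg : 0 <= dl * (G * Num.sqrt 2) by rewrite mulr_ge0 // ltW.
  have hn0 := subdiff_rho_tr0 hn.
  split=> //; split; first by rewrite hsig pres_return.
  split=> //; rewrite hsig in hn *.
  exact: rho_return hdlg (dev_return _ _ _ _ hn0) hn.
move=> p r eps dl [hdl [hp [hr [heps hf]]]]; rewrite -!mulrA in hp hr.
rewrite /sigma_of_R -!mulrA.
have hdlg : 0 <= dl * (G * Num.sqrt 2) by rewrite mulr_ge0 // ltW.
case: ifPn => [hlt|]; last rewrite -leNgt => hle.
  set n := _ *: dev sigtr.
  have hn := subdiff_rho_return_smooth (K * etab) hdlg hlt.
  have hn0 := subdiff_rho_tr0 hn.
  split; first by apply/symm_return/symmZ/symm_dev.
  do 2 split => //; first by exists n.
  by rewrite /fyield pres_return // (rho_return hdlg (dev_return _ _ _ _ hn0) hn) -hp -hr.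
split; first exact: symmC.
do 2 split => //; first exists ((dl * (G * Num.sqrt 2))^-1 *: dev sigtr).
  by rewrite return_apex //; split; first exact: subdiff_rho_apex.
rewrite hr pos_part_eq0 ?subr_le0 // in hf.
by rewrite /fyield presC rhoC -hp.
Qed.
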